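(* Let $X$ be a connected separable $T_1$-space. Then for all but countably many points $x \in X$, the subspace $X\setminus\{x\}$ has at most two connected components. *)

Set Implicit Arguments.

Record TopSpace := {
  carrier :> Type;
  is_open : (carrier -> Prop) -> Prop;
  open_full : is_open (fun _ => True);
  open_inter : forall U V, is_open U -> is_open V -> is_open (fun x => U x /\ V x);
  open_union : forall (F : (carrier -> Prop) -> Prop),
      (forall U, F U -> is_open U) -> is_open (fun x => exists U, F U /\ U x)
}.

Section Topo.
Variable X : TopSpace.

Definition countable (A : X -> Prop) : Prop :=
  exists f : X -> nat, forall a b, A a -> A b -> f a = f b -> a = b.

Definition dense (D : X -> Prop) : Prop :=
  forall U, is_open X U -> (exists u, U u) -> exists d, U d /\ D d.

Definition separable : Prop := exists D, countable D /\ dense D.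

Definition T1 : Prop :=
  forall x y : X, x <> y -> exists U, is_open X U /\ U x /\ ~ U y.

(* S is connected in the subspace topology: its relatively open sets are the S ∩ U,
   and it cannot be split into two disjoint nonempty relatively open pieces. *)
Definition connected_set (S : X -> Prop) : Prop :=
  ~ exists U V, is_open X U /\ is_open X V /\
      (forall s, S s -> U s \/ V s) /\
      (exists s, S s /\ U s) /\ (exists s, S s /\ V s) /\
      (forall s, S s -> U s -> V s -> False).

Definition connected_space : Prop := connected_set (fun _ => True).

Definition is_component (Y C : X -> Prop) : Prop :=
  (forall c, C c -> Y c) /\ (exists c, C c) /\ connected_set C /\
  (forall D, (forall d, D d -> Y d) -> connected_set D ->
     (forall c, C c -> D c) -> forall d, D d -> C d).

Definition at_most_two_components (Y : X -> Prop) : Prop :=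
  forall C1 C2 C3, is_component Y C1 -> is_component Y C2 -> is_component Y C3 ->
    (forall z, C1 z <-> C2 z) \/ (forall z, C1 z <-> C3 z) \/ (forall z, C2 z <-> C3 z).

End Topo.

(* Call x a 3-cut point if X∖{x} is the disjoint union of three nonempty open
   sets U1, U2, U3 (by T1, X∖{x} is open, so open in X and open in X∖{x} agree).
   1. If X∖{x} has at least three components then x is a 3-cut point: if X∖{x}
      is disconnected, it splits into two open pieces A, B; if both are
      connected, the components of X∖{x} are exactly A and B, and if one is
      disconnected, splitting it once more gives three pieces.
   2. If X∖{x} = U ⊔ W with U, W open, then {x} ∪ W is connected (otherwise a
      separation of it, glued with U, would separate X).
   3. Hence two distinct 3-cut points x ≠ y cannot have pieces with common
      points a1 ∈ U1 ∩ V1, a2 ∈ U2 ∩ V2, a3 ∈ U3 ∩ V3: if y lies in U1, the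
      connected set {x} ∪ U2 ∪ U3 avoids y, yet meets both V2 and V1 ∪ V3.
   4. Choosing a1, a2, a3 in a countable dense set D therefore codes 3-cut
      points injectively by triples of elements of D, so there are countably
      many of them. *)

From Stdlib Require Import Classical ClassicalEpsilon Cantor
  FunctionalExtensionality PropExtensionality.

Set Implicit Arguments.

Lemma to_nat_injective (p q : nat * nat) : to_nat p = to_nat q -> p = q.
Proof. intro e; rewrite <- (cancel_of_to p), e; apply cancel_of_to. Qed.

Lemma countable_of_triple_code (X : TopSpace) (A D : X -> Prop)
    (R : X -> X -> X -> X -> Prop) :
  countable X D ->
  (forall a, A a -> exists d1 d2 d3, D d1 /\ D d2 /\ D d3 /\ R a d1 d2 d3) ->
  (forall a b d1 d2 d3, R a d1 d2 d3 -> R b d1 d2 d3 -> a = b) ->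
  countable X A.
Proof.
  intros [f f_inj] hcode hdet.
  set (code := fun a n => exists d1 d2 d3, D d1 /\ D d2 /\ D d3 /\ R a d1 d2 d3 /\
                 n = to_nat (f d1, to_nat (f d2, f d3))).
  exists (fun a => epsilon (inhabits 0) (code a)).
  intros a b ha hb e.
  assert (code_spec : forall c, A c -> code c (epsilon (inhabits 0) (code c))).
  { intros c hc; apply epsilon_spec.
    destruct (hcode c hc) as (d1 & d2 & d3 & D1 & D2 & D3 & hR).
    exists (to_nat (f d1, to_nat (f d2, f d3))), d1, d2, d3; auto. }
  destruct (code_spec a ha) as (d1 & d2 & d3 & D1 & D2 & D3 & Ra & ea).
  destruct (code_spec b hb) as (e1 & e2 & e3 & E1 & E2 & E3 & Rb & eb).
  rewrite e, eb in ea.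
  apply to_nat_injective, pair_equal_spec in ea as [e1f e23].
  apply to_nat_injective, pair_equal_spec in e23 as [e2f e3f].
  apply f_inj in e1f; apply f_inj in e2f; apply f_inj in e3f; auto.
  subst; exact (hdet _ _ _ _ _ Ra Rb).
Qed.

Section CutPoints.
Variable X : TopSpace.

Lemma open_ext (U V : X -> Prop) :
  (forall z, U z <-> V z) -> is_open X U -> is_open X V.
Proof.
  intros hUV hU.
  replace V with U; auto.
  apply functional_extensionality; intro z; apply propositional_extensionality; auto.
Qed.

Lemma open_union2 (U V : X -> Prop) :
  is_open X U -> is_open X V -> is_open X (fun z => U z \/ V z).
Proof.
  intros hU hV.
  apply open_ext with (U := fun z => exists W, (W = U \/ W = V) /\ W z).
  - intro z; split.
    + intros [W [[-> | ->] hW]]; auto.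
    + intros [h | h]; eauto.
  - apply open_union; intros W [-> | ->]; auto.
Qed.

(* In a T1-space the complement of a point is open: it is the union of all
   open sets missing the point. *)
Lemma open_point_complement (x : X) : T1 X -> is_open X (fun z => z <> x).
Proof.
  intro hT1.
  apply open_ext with (U := fun z => exists W, (is_open X W /\ ~ W x) /\ W z).
  - intro z; split.
    + intros [W [[_ hWx] hWz]] ->; auto.
    + intro hzx; destruct (hT1 z x hzx) as [W [hW [hWz hWx]]]; eauto.
  - apply open_union; tauto.
Qed.

Definition separates (S U V : X -> Prop) : Prop :=
  is_open X U /\ is_open X V /\ (forall s, S s -> U s \/ V s) /\
  (exists s, S s /\ U s) /\ (exists s, S s /\ V s) /\
  (forall s, S s -> U s -> V s -> False).

Lemma separates_sym (S U V : X -> Prop) : separates S U V -> separates S V U.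
Proof.
  intros (hU & hV & hcov & hSU & hSV & hdis).
  repeat split; auto.
  - intros s hs; destruct (hcov s hs); auto.
  - intros s hs hVs hUs; eauto.
Qed.

Lemma connected_in_one_piece (S U V : X -> Prop) :
  connected_set X S -> is_open X U -> is_open X V ->
  (forall s, S s -> U s \/ V s) -> (forall s, S s -> U s -> V s -> False) ->
  (exists s, S s /\ U s) -> forall s, S s -> U s.
Proof.
  intros hS hU hV hcov hdis hSU s hs.
  apply NNPP; intro hUs.
  apply hS; exists U, V; repeat split; auto.
  exists s; split; auto; destruct (hcov s hs); tauto.
Qed.

Record two_cut (x : X) (U W : X -> Prop) : Prop := {
  two_cut_open_l : is_open X U;
  two_cut_open_r : is_open X W;
  two_cut_cover : forall z, z <> x -> U z \/ W z;
  two_cut_disj : forall z, U z -> W z -> False }.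

Lemma two_cut_sym (x : X) (U W : X -> Prop) : two_cut x U W -> two_cut x W U.
Proof.
  intros [hU hW hcov hdis]; split; auto.
  - intros z hz; destruct (hcov z hz); auto.
  - intros z hWz hUz; eauto.
Qed.

Record three_cut (x : X) (U1 U2 U3 : X -> Prop) : Prop := {
  three_cut_open1 : is_open X U1;
  three_cut_open2 : is_open X U2;
  three_cut_open3 : is_open X U3;
  three_cut_avoid : forall z, U1 z \/ U2 z \/ U3 z -> z <> x;
  three_cut_cover : forall z, z <> x -> U1 z \/ U2 z \/ U3 z;
  three_cut_disj12 : forall z, U1 z -> U2 z -> False;
  three_cut_disj13 : forall z, U1 z -> U3 z -> False;
  three_cut_disj23 : forall z, U2 z -> U3 z -> False;
  three_cut_ne1 : exists z, U1 z;
  three_cut_ne2 : exists z, U2 z;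
  three_cut_ne3 : exists z, U3 z }.

Lemma three_cut_rotate (x : X) (U1 U2 U3 : X -> Prop) :
  three_cut x U1 U2 U3 -> three_cut x U2 U3 U1.
Proof.
  intros [o1 o2 o3 hav hcov d12 d13 d23 n1 n2 n3]; split; auto.
  - intros z hz; apply hav; tauto.
  - intros z hz; destruct (hcov z hz) as [? | [? | ?]]; auto.
  - intros z h2 h1; eauto.
  - intros z h3 h1; eauto.
Qed.

Lemma three_cut_merge (x : X) (U1 U2 U3 : X -> Prop) :
  three_cut x U1 U2 U3 -> two_cut x U1 (fun z => U2 z \/ U3 z).
Proof.
  intros [o1 o2 o3 _ hcov d12 d13 _ _ _ _]; split.
  - exact o1.
  - apply open_union2; auto.
  - intros z hz; destruct (hcov z hz) as [? | [? | ?]]; auto.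
  - intros z h1 [h2 | h3]; eauto.
Qed.

Lemma three_cut_of_separated_piece (x : X) (A B P Q : X -> Prop) :
  two_cut x A B -> (forall z, A z \/ B z -> z <> x) -> (exists z, B z) ->
  separates A P Q -> three_cut x B (fun z => A z /\ P z) (fun z => A z /\ Q z).
Proof.
  intros [oA oB hcov hdis] hav hB (oP & oQ & hAPQ & [p hp] & [q hq] & hdPQ).
  split; auto using open_inter.
  - intros z [h | [[h _] | [h _]]]; auto.
  - intros z hz; destruct (hcov z hz) as [hA | hB']; auto.
    destruct (hAPQ z hA); auto.
  - intros z hBz [hAz _]; eauto.
  - intros z hBz [hAz _]; eauto.
  - intros z [hAz hPz] [_ hQz]; eauto.
  - exists p; tauto.
  - exists q; tauto.
Qed.

Section ConnectedSpace.
Hypothesis X_connected : connected_space X.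

(* If X∖{x} = U ⊔ W with U, W open, a separation P, Q of {x} ∪ W with x ∈ P
   yields the separation U ∪ P, Q ∩ W of X. *)
Lemma cut_piece_not_separated_at_point (x : X) (U W P Q : X -> Prop) :
  two_cut x U W -> separates (fun z => z = x \/ W z) P Q -> P x -> False.
Proof.
  intros [oU oW hcov hdis] (oP & oQ & hPQ & _ & [s [hs hQs]] & hdPQ) hPx.
  apply X_connected.
  exists (fun z => U z \/ P z), (fun z => Q z /\ W z).
  repeat split; auto using open_union2, open_inter.
  - intros z _; destruct (classic (z = x)) as [-> | hzx]; auto.
    destruct (hcov z hzx) as [hU | hW]; auto.
    destruct (hPQ z (or_intror hW)); auto.
  - exists x; auto.
  - assert (hsx : s <> x) by (intros ->; eauto).
    exists s; repeat split; auto; destruct hs; tauto.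
  - intros z _ [hU | hP] [hQ hW]; eauto.
Qed.

Lemma cut_piece_connected (x : X) (U W : X -> Prop) :
  two_cut x U W -> connected_set X (fun z => z = x \/ W z).
Proof.
  intros hcut [P [Q hsep]].
  assert (hPQ : forall s, s = x \/ W s -> P s \/ Q s) by apply hsep.
  destruct (hPQ x (or_introl eq_refl)) as [hP | hQ].
  - exact (cut_piece_not_separated_at_point hcut hsep hP).
  - exact (cut_piece_not_separated_at_point hcut (separates_sym hsep) hQ).
Qed.

Lemma distinct_cut_points (x y a b : X) (U W V V' : X -> Prop) :
  two_cut x U W -> two_cut y V V' -> x <> y -> ~ W y ->
  W a -> V a -> W b -> V' b -> False.
Proof.
  intros hx [oV oV' hcov hdis] hxy hWy hWa hVa hWb hVb.
  apply (cut_piece_connected hx); exists V, V'.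
  repeat split; eauto.
  intros s [-> | hWs]; apply hcov; [auto | intros ->; auto].
Qed.

Lemma three_cuts_sharing_points_first (x y a2 a3 : X)
    (U1 U2 U3 V1 V2 V3 : X -> Prop) :
  three_cut x U1 U2 U3 -> three_cut y V1 V2 V3 -> x <> y -> U1 y ->
  U2 a2 -> V2 a2 -> U3 a3 -> V3 a3 -> False.
Proof.
  intros hx hy hxy hy1 u2 v2 u3 v3.
  apply (distinct_cut_points a2 a3 (three_cut_merge hx)
           (three_cut_merge (three_cut_rotate hy)) hxy); auto.
  intros [h2 | h3]; [exact (three_cut_disj12 hx y hy1 h2) | exact (three_cut_disj13 hx y hy1 h3)].
Qed.

Lemma three_cuts_sharing_points (x y a1 a2 a3 : X)
    (U1 U2 U3 V1 V2 V3 : X -> Prop) :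
  three_cut x U1 U2 U3 -> three_cut y V1 V2 V3 ->
  U1 a1 -> V1 a1 -> U2 a2 -> V2 a2 -> U3 a3 -> V3 a3 -> x = y.
Proof.
  intros hx hy u1 v1 u2 v2 u3 v3.
  apply NNPP; intro hxy.
  destruct (three_cut_cover hx (fun e => hxy (eq_sym e))) as [h | [h | h]].
  - exact (three_cuts_sharing_points_first a2 a3 hx hy hxy h u2 v2 u3 v3).
  - exact (three_cuts_sharing_points_first a3 a1 (three_cut_rotate hx) (three_cut_rotate hy)
             hxy h u3 v3 u1 v1).
  - exact (three_cuts_sharing_points_first a1 a2 (three_cut_rotate (three_cut_rotate hx))
             (three_cut_rotate (three_cut_rotate hy)) hxy h u1 v1 u2 v2).
Qed.

End ConnectedSpace.

Lemma connected_component_whole (Y C : X -> Prop) :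
  connected_set X Y -> is_component X Y C -> forall z, C z <-> Y z.
Proof.
  intros hY (hCY & _ & _ & hmax) z; split; auto.
  intro hz; exact (hmax Y (fun _ h => h) hY hCY z hz).
Qed.

Lemma component_of_two_pieces (Y A B C : X -> Prop) :
  is_open X A -> is_open X B -> (forall z, Y z -> A z \/ B z) ->
  (forall z, A z \/ B z -> Y z) -> (forall z, A z -> B z -> False) ->
  connected_set X A -> connected_set X B -> is_component X Y C ->
  (forall z, C z <-> A z) \/ (forall z, C z <-> B z).
Proof.
  intros oA oB hcov hsub hdis cA cB (hCY & [c hc] & cC & hmax).
  assert (hcovC : forall z, C z -> A z \/ B z) by auto.
  assert (C_in_A : (exists s, C s /\ A s) -> forall z, C z -> A z).
  { apply (@connected_in_one_piece C A B cC oA oB hcovC); eauto. }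
  assert (C_in_B : (exists s, C s /\ B s) -> forall z, C z -> B z).
  { apply (@connected_in_one_piece C B A cC oB oA); eauto.
    intros s hs; destruct (hcovC s hs); auto. }
  destruct (hcovC c hc) as [hA | hB]; [left | right]; intro z; split.
  - apply C_in_A; eauto.
  - apply (hmax A); auto; apply C_in_A; eauto.
  - apply C_in_B; eauto.
  - apply (hmax B); auto; apply C_in_B; eauto.
Qed.

Lemma two_of_three_agree (A B C1 C2 C3 : X -> Prop) :
  ((forall z, C1 z <-> A z) \/ (forall z, C1 z <-> B z)) ->
  ((forall z, C2 z <-> A z) \/ (forall z, C2 z <-> B z)) ->
  ((forall z, C3 z <-> A z) \/ (forall z, C3 z <-> B z)) ->
  (forall z, C1 z <-> C2 z) \/ (forall z, C1 z <-> C3 z) \/ (forall z, C2 z <-> C3 z).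
Proof.
  intros [e1 | e1] [e2 | e2] [e3 | e3];
  first [ left; intro z; rewrite e1, e2; tauto
        | right; left; intro z; rewrite e1, e3; tauto
        | right; right; intro z; rewrite e2, e3; tauto ].
Qed.

Lemma three_cut_of_many_components (x : X) :
  T1 X -> ~ at_most_two_components X (fun z => z <> x) ->
  exists U1 U2 U3, three_cut x U1 U2 U3.
Proof.
  intros hT1 hmany; apply NNPP; intro hno; apply hmany.
  set (Y := fun z : X => z <> x).
  destruct (classic (connected_set X Y)) as [hY | hY].
  { intros C1 C2 C3 h1 h2 _; left; intro z.
    rewrite (connected_component_whole hY h1), (connected_component_whole hY h2); tauto. }
  apply NNPP in hY; destruct hY as (U & V & oU & oV & hcov & [u hu] & [v hv] & hdis).
  set (A := fun z => U z /\ Y z); set (B := fun z => V z /\ Y z).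
  assert (oY : is_open X Y) by exact (open_point_complement x hT1).
  assert (hAB : two_cut x A B).
  { split; try (apply open_inter; auto).
    - intros z hz; destruct (hcov z hz); [left | right]; split; auto.
    - intros z [hUz hz] [hVz _]; eauto. }
  assert (hav : forall z, A z \/ B z -> z <> x) by (intros z [[_ h] | [_ h]]; auto).
  assert (cA : connected_set X A).
  { intros [P [Q hPQ]]; apply hno.
    exists B, (fun z => A z /\ P z), (fun z => A z /\ Q z).
    apply three_cut_of_separated_piece; auto; exists v; split; tauto. }
  assert (cB : connected_set X B).
  { intros [P [Q hPQ]]; apply hno.
    exists A, (fun z => B z /\ P z), (fun z => B z /\ Q z).
    apply three_cut_of_separated_piece; auto using two_cut_sym.
    - intros z [? | ?]; apply hav; auto.
    - exists u; split; tauto. }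
  destruct hAB as [oA oB hcovAB hdisAB].
  intros C1 C2 C3 h1 h2 h3.
  apply (two_of_three_agree A B);
    apply (@component_of_two_pieces Y A B); auto.
Qed.

End CutPoints.

Theorem theorem7p3 (X : TopSpace) :
  connected_space X -> separable X -> T1 X ->
  @countable X (fun x : X => ~ @at_most_two_components X (fun y : X => y <> x)).
Proof.
  intros hX [D [hDcount hDdense]] hT1.
  apply (@countable_of_triple_code X _ D
           (fun x d1 d2 d3 => exists U1 U2 U3,
                   three_cut X x U1 U2 U3 /\ U1 d1 /\ U2 d2 /\ U3 d3) hDcount).
  - intros x hx.
    destruct (three_cut_of_many_components hT1 hx) as (U1 & U2 & U3 & hcut).
    destruct (hDdense U1 (three_cut_open1 hcut) (three_cut_ne1 hcut)) as [d1 [? ?]].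
    destruct (hDdense U2 (three_cut_open2 hcut) (three_cut_ne2 hcut)) as [d2 [? ?]].
    destruct (hDdense U3 (three_cut_open3 hcut) (three_cut_ne3 hcut)) as [d3 [? ?]].
    exists d1, d2, d3; repeat split; auto.
    exists U1, U2, U3; auto.
  - intros x y d1 d2 d3 (U1 & U2 & U3 & hx & u1 & u2 & u3) (V1 & V2 & V3 & hy & v1 & v2 & v3).
    exact (three_cuts_sharing_points hX d1 d2 d3 hx hy u1 v1 u2 v2 u3 v3).
Qed.
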